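(* Let $n\ge2$, $N\ge1$, $\Omega\subset\mathbb R^n$ open. Let $a:[0,\infty)\to[0,\infty)$ be of the form $a(t)=\widehat a(t^2)$ for some $\widehat a\in C^1([0,\infty))$, with $a(t)>0$ for $t>0$, and assume $i_a>-\tfrac12$. Then there exists a positive constant $C=C(n,N,i_a)$ such that, for every $\mathbf u=(u^1,\dots,u^N)\in C^3(\Omega,\mathbb R^N)$, $$\big|\mathrm{\mathbf{div}}(a(|\nabla\mathbf u|)\nabla\mathbf u)\big|^2\ge\sum_{j=1}^n\big(a(|\nabla\mathbf u|)^2\,\mathbf u_{x_j}\cdot\Delta\mathbf u\big)_{x_j}-\sum_{i=1}^n\Big(a(|\nabla\mathbf u|)^2\sum_{j=1}^n\mathbf u_{x_j}\cdot\mathbf u_{x_ix_j}\Big)_{x_i}+C\,a(|\nabla\mathbf u|)^2|\nabla^2\mathbf u|^2\quad\text{in }\Omega.$$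
   Context: $i_a=\inf_{t>0}\frac{ta'(t)}{a(t)}$. The dot denotes the scalar product in $\mathbb R^N$, and $|\nabla^2\mathbf u|=\big(\sum_{\alpha=1}^N\sum_{i,j=1}^n(u^\alpha_{x_ix_j})^2\big)^{1/2}$. *)

From HB Require Import structures.
From mathcomp Require Import all_boot all_order all_algebra.
From mathcomp Require Import all_classical all_reals all_analysis.
Set Implicit Arguments. Unset Strict Implicit. Unset Printing Implicit Defensive.
Import Order.TTheory GRing.Theory Num.Theory.
Import numFieldNormedType.Exports.
Local Open Scope classical_set_scope.
Local Open Scope ring_scope.

Section Defs.
Variables (R : realType) (n : nat).

Definition pd (i : 'I_n) (f : 'rV[R]_n -> R) : 'rV[R]_n -> R :=
  fun x => 'D_(delta_mx 0 i) f x.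

Fixpoint Ck (k : nat) (O : set 'rV[R]_n) (f : 'rV[R]_n -> R) : Prop :=
  match k with
  | 0 => forall x, O x -> {for x, continuous f}
  | k'.+1 => (forall (i : 'I_n) x, O x -> derivable f x (delta_mx 0 i)) /\
             Ck k' O f /\ (forall i : 'I_n, Ck k' O (pd i f))
  end.

Definition lap (f : 'rV[R]_n -> R) : 'rV[R]_n -> R :=
  fun x => \sum_(i < n) pd i (pd i f) x.

Variable N : nat.
Definition gradnorm (u : 'I_N -> 'rV[R]_n -> R) : 'rV[R]_n -> R :=
  fun x => Num.sqrt (\sum_(al < N) \sum_(i < n) (pd i (u al) x) ^+ 2).

Definition hess2 (u : 'I_N -> 'rV[R]_n -> R) : 'rV[R]_n -> R :=
  fun x => \sum_(al < N) \sum_(i < n) \sum_(j < n) (pd j (pd i (u al)) x) ^+ 2.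
End Defs.

Definition C1_halfline (R : realType) (f : R -> R) : Prop :=
  exists g : R -> R,
    (forall t : R, 0 <= t ->
       (fun s => (s - t)^-1 * (f s - f t)) @ within [set s | 0 <= s /\ s != t] (nbhs t)
         --> g t) /\
    {within `[0, +oo[, continuous g}.

(* Write A = a(|Du|) = ahat(|Du|^2). Expanding the three divergence expressions
   by the product rule, and using the symmetry of second and third derivatives
   of u, every term containing a third derivative of u or Delta u cancels:
     |div(A Du)|^2 - T1 + T2 = sum_al (Du^al . DA)^2 + A^2 |D^2u|^2 + 2 A DA . W,
   where T1 - T2 are the first two terms of the right-hand side, W_k = Du . D_k Du
   and DA = 2 ahat'(|Du|^2) W. If ahat'(|Du|^2) >= 0 the last term is nonnegative.
   Otherwise Cauchy-Schwarz gives |W|^2 <= |Du|^2 |D^2u|^2, and since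
   t a'(t) = 2 t^2 ahat'(t^2) the definition of i_a gives
   i_a A <= 2 |Du|^2 ahat'(|Du|^2); so the last term is at least
   2 i_a A^2 |D^2u|^2, and C = min(1, 1 + 2 i_a) works. *)

From HB Require Import structures.
From mathcomp Require Import all_boot all_order all_algebra.
From mathcomp Require Import all_classical all_reals all_analysis.
From mathcomp Require Import ring lra.

Set Implicit Arguments.
Unset Strict Implicit.
Unset Printing Implicit Defensive.

Import Order.TTheory GRing.Theory Num.Theory.
Import numFieldNormedType.Exports.
Local Open Scope classical_set_scope.
Local Open Scope ring_scope.

Section PointwiseDerive.
Variables (R : numFieldType) (V : normedModType R).

Lemma is_derive_mul (f g : V -> R) (x v : V) (df dg : R) :
  is_derive x v f df -> is_derive x v g dg ->
  is_derive x v (fun y => f y * g y) (f x * dg + g x * df).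
Proof. exact: is_deriveM. Qed.

Lemma is_derive_sumr (m : nat) (h : 'I_m -> V -> R) (x v : V) (dh : 'I_m -> R) :
  (forall k, is_derive x v (h k) (dh k)) ->
  is_derive x v (fun y => \sum_(k < m) h k y) (\sum_(k < m) dh k).
Proof. by move=> h_d; rewrite -fct_sumE; exact: is_derive_sum. Qed.
End PointwiseDerive.

Lemma is_derive_line (R : numFieldType) (V W : normedModType R) (f : V -> W)
    (v p : V) (s : R) :
  derivable f (s *: v + p) v ->
  is_derive s 1 (fun r : R => f (r *: v + p)) ('D_v f (s *: v + p)).
Proof.
have quotE : (fun h : R => h^-1 *: (f ((h *: 1 + s) *: v + p) - f (s *: v + p))) =
    (fun h => h^-1 *: (f (h *: v + (s *: v + p)) - f (s *: v + p))).
  by apply/funext => h; rewrite scalerDl addrA [h *: 1]mulr1.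
by move=> df; apply: DeriveDef; rewrite /derivable /derive /= quotE.
Qed.

Lemma MVT_segment (R : realType) (g dg : R -> R) (h : R) : 0 < h ->
  (forall s, 0 <= s <= h -> is_derive s 1 g (dg s)) ->
  exists2 c, 0 <= c <= h & g h - g 0 = dg c * h.
Proof.
move=> h_gt0 g_dg.
have inI s : s \in `[0, h] -> 0 <= s <= h by rewrite in_itv.
have g_cont : {within `[0, h], continuous g}.
  apply: derivable_within_continuous => s /inI s_in.
  by case: (g_dg s s_in).
have [c /subset_itv_oo_cc/inI c_in gE] :=
  MVT h_gt0 (fun s s_in => g_dg s (inI s (subset_itv_oo_cc s_in))) g_cont.
by exists c; rewrite // gE subr0.
Qed.

Definition is_derive_halfline (R : realType) (f : R -> R) (t df : R) : Prop :=
  (fun s => (s - t)^-1 * (f s - f t)) @ within [set s | 0 <= s /\ s != t] (nbhs t)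
    --> df.

Section HalflineDerivative.
Variable R : realType.

Lemma is_derive_halfline_comp (V : normedModType R) (f : R -> R) (S : V -> R)
    (x v : V) (df dS : R) :
  (forall y, 0 <= S y) -> is_derive_halfline f (S x) df -> is_derive x v S dS ->
  is_derive x v (fun y => f (S y)) (df * dS).
Proof.
move=> S_ge0 f_df [S_derivable <-]; set t := S x.
(* Caratheodory's form of the derivative: f s - f t = q s * (s - t), with q
   continuous at t along [0, +oo[, where S takes its values. *)
pose q s := if s == t then df else (s - t)^-1 * (f s - f t).
have fq s : f s - f t = q s * (s - t).
  rewrite /q; case: eqP => [->|/eqP st]; first by rewrite !subrr mulr0.
  by rewrite mulrAC mulVf ?mul1r ?subr_eq0.
pose Sh h := S (h *: v + x).
have Sh_cvg : Sh h @[h --> 0^'] --> t.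
  suff : {for 0, continuous Sh} by move=> /continuous_withinNx; rewrite /Sh scale0r add0r.
  exact/differentiable_continuous/derivable1_diffP/(derivable1P _ _ _).1.
have qSh_cvg : q (Sh h) @[h --> 0^'] --> df.
  apply/cvgrPdist_lt => e e0.
  have near_t : \forall s \near t, 0 <= s -> `|df - q s| < e.
    have : \forall s \near t, 0 <= s /\ s != t -> `|df - (s - t)^-1 * (f s - f t)| < e.
      by move/cvgrPdist_lt : f_df; apply.
    apply: filterS => s near_s s0.
    rewrite /q; case: eqP => [_|/eqP st]; first by rewrite subrr normr0.
    exact: near_s.
  have : \forall h \near 0^', 0 <= Sh h -> `|df - q (Sh h)| < e := Sh_cvg _ near_t.
  by apply: filterS => h; apply; exact: S_ge0.
have quotE : (fun h : R => h^-1 *: (f (Sh h) - f t)) =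
    (fun h => q (Sh h) * (h^-1 *: (Sh h - t))).
  by apply/funext => h; rewrite fq /GRing.scale /= mulrCA.
have : h^-1 *: (f (Sh h) - f t) @[h --> 0^'] --> df * 'D_v S x.
  by rewrite quotE; apply: cvgM => //; exact: S_derivable.
move=> /[dup] /cvgP cvg_quot /cvg_lim lim_quot.
by apply: DeriveDef; [exact: cvg_quot | exact: lim_quot].
Qed.
End HalflineDerivative.

Section IndexBound.
Variable R : realType.

Lemma derive1_comp_sqr (a f : R -> R) (t df : R) :
  (forall s, 0 <= s -> a s = f (s ^+ 2)) -> 0 < t ->
  is_derive_halfline f (t ^+ 2) df -> derive1 a t = df * (2 * t).
Proof.
move=> aE t_gt0 f_df.
have sqr_t : is_derive t (1 : R) (fun s : R => s ^+ 2) (t * 1 + t * 1).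
  exact: is_derive_mul (is_derive_id t 1) (is_derive_id t 1).
have := is_derive_halfline_comp (fun s : R => sqr_ge0 s) f_df sqr_t.
rewrite (_ : t * 1 + t * 1 = 2 * t); last by ring.
move=> [_ <-]; rewrite derive1E; apply: near_eq_derive.
by near=> s; apply: aE; apply: ltW; near: s; exact: lt_nbhsr.
Unshelve. all: by end_near.
Qed.

Lemma ereal_inf_image_le (h : R -> R) (D : set R) (m t : R) :
  ereal_inf [set (h s)%:E | s in D] = m%:E -> D t -> m <= h t.
Proof.
move=> infE Dt; rewrite -lee_fin -infE.
by apply: ereal_inf_lbound; exists t.
Qed.

Lemma index_lower_bound (a f : R -> R) (ia t df : R) :
  (forall s, 0 <= s -> a s = f (s ^+ 2)) -> 0 < t -> 0 < a t ->
  is_derive_halfline f (t ^+ 2) df ->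
  ereal_inf [set ((s * derive1 a s / a s)%:E) | s in `]0, +oo[%classic] = ia%:E ->
  ia * a t <= 2 * t ^+ 2 * df.
Proof.
move=> aE t_gt0 at_gt0 f_df infE.
have -> : 2 * t ^+ 2 * df = t * (df * (2 * t)) by ring.
rewrite -ler_pdivlMr // -(derive1_comp_sqr aE t_gt0 f_df).
by apply: ereal_inf_image_le infE _; rewrite /= in_itv /= t_gt0.
Qed.
End IndexBound.

Section PartialDerivatives.
Variables (R : realType) (n : nat).
Local Notation V := 'rV[R]_n.
Local Notation e i := (delta_mx 0 i : V).
Implicit Types (O : set V) (f : V -> R).

Lemma pd_val f i x df : is_derive x (e i) f df -> pd i f x = df.
Proof. by case. Qed.

Lemma Ck_derivable k O f i x : Ck k.+1 O f -> O x -> derivable f x (e i).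
Proof. by case=> f_derivable _ Ox; exact: f_derivable. Qed.

Lemma CkS k O f : Ck k.+1 O f -> Ck k O f.
Proof. by case=> _ []. Qed.

Lemma Ck_pd k O f i : Ck k.+1 O f -> Ck k O (pd i f).
Proof. by case=> _ [_]; apply. Qed.

Lemma norm_delta_mx_le1 i : `|e i| <= 1.
Proof.
rewrite [leLHS]/Num.norm /= mx_normrE; apply: bigmax_le => // -[a b] _ /=.
by rewrite mxE; case: (_ && _); rewrite ?normr1 ?normr0.
Qed.

Definition diff2 f (u w x : V) := f (u + (w + x)) - f (u + x) - f (w + x) + f x.

Lemma diff2C f u w x : diff2 f u w x = diff2 f w u x.
Proof. by rewrite /diff2 addrCA; ring. Qed.

Lemma diff2_mvt f i j x h : 0 < h ->
  (forall s t, 0 <= s <= h -> 0 <= t <= h ->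
     derivable f (s *: e i + (t *: e j + x)) (e i) /\
     derivable (pd i f) (s *: e i + (t *: e j + x)) (e j)) ->
  exists s t, [/\ 0 <= s <= h, 0 <= t <= h &
    diff2 f (h *: e i) (h *: e j) x = h ^+ 2 * pd j (pd i f) (s *: e i + (t *: e j + x))].
Proof.
move=> h_gt0 f_derivable.
have h_in : 0 <= h <= h by rewrite (ltW h_gt0) lexx.
have zero_in : 0 <= (0 : R) <= h by rewrite lexx (ltW h_gt0).
have shift0 s : s *: e i + x = s *: e i + (0 *: e j + x) by rewrite scale0r add0r.
pose g s := f (s *: e i + (h *: e j + x)) - f (s *: e i + x).
have [s s_in gE] : exists2 s, 0 <= s <= h &
    g h - g 0 = (pd i f (s *: e i + (h *: e j + x)) - pd i f (s *: e i + x)) * h.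
  apply: MVT_segment => [//|s s_in]; apply: is_deriveB; apply: is_derive_line.
    by case: (f_derivable s h s_in h_in).
  by rewrite shift0; case: (f_derivable s 0 s_in zero_in).
pose k t := pd i f (t *: e j + (s *: e i + x)).
have [t t_in kE] : exists2 t, 0 <= t <= h &
    k h - k 0 = pd j (pd i f) (s *: e i + (t *: e j + x)) * h.
  apply: MVT_segment => [//|t t_in].
  have swap : s *: e i + (t *: e j + x) = t *: e j + (s *: e i + x) := addrCA _ _ _.
  rewrite swap; apply: is_derive_line; rewrite -swap.
  by case: (f_derivable s t s_in t_in).
exists s, t; split => //.
have diff2E : diff2 f (h *: e i) (h *: e j) x = g h - g 0.
  by rewrite /diff2 /g scale0r !add0r; ring.
have kE' : k h - k 0 = pd i f (s *: e i + (h *: e j + x)) - pd i f (s *: e i + x).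
  by rewrite /k scale0r !add0r (addrCA (h *: e j)).
by rewrite diff2E gE -kE' kE; ring.
Qed.

Lemma square_in_ball x del s t i j : 0 < del ->
  0 <= s <= del / 3 -> 0 <= t <= del / 3 -> ball x del (s *: e i + (t *: e j + x)).
Proof.
move=> del_gt0 /andP[s_ge0 s_le] /andP[t_ge0 t_le].
rewrite -ball_normE /= addrA opprD addrCA subrr addr0 normrN.
apply: le_lt_trans (ler_normD _ _) _; rewrite !normrZ !ger0_norm //.
have := norm_delta_mx_le1 i; have := norm_delta_mx_le1 j.
have := normr_ge0 (e i); have := normr_ge0 (e j); nra.
Qed.

Lemma Ck2_pdC O f i j x : open O -> O x -> Ck 2 O f ->
  pd j (pd i f) x = pd i (pd j f) x.
Proof.
move=> O_open Ox f_C2.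
(* Both mixed partials at x are limits of diff2 f (h *: e i) (h *: e j) x / h^2. *)
set a := pd j (pd i f) x; set b := pd i (pd j f) x.
apply/eqP; rewrite -subr_eq0 -normr_le0; apply/ler_addgt0Pr => eps eps_gt0.
have near_x : \forall y \near x,
    O y /\ `|a - pd j (pd i f) y| < eps / 2 /\ `|b - pd i (pd j f) y| < eps / 2.
  have eps2_gt0 : 0 < eps / 2 by rewrite divr_gt0.
  have near_pd k l : \forall y \near x,
      `|pd l (pd k f) x - pd l (pd k f) y| < eps / 2.
    by move/cvgrPdist_lt: (Ck_pd l (Ck_pd k f_C2) x Ox); apply.
  exact: filterI (open_nbhs_nbhs (conj O_open Ox)) (filterI (near_pd i j) (near_pd j i)).
move/nbhs_ballP: near_x => [del /= del_gt0 near_x].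
have h_gt0 : 0 < del / 3 by rewrite divr_gt0.
have mvt k l : exists s t, [/\ 0 <= s <= del / 3, 0 <= t <= del / 3 &
    diff2 f ((del / 3) *: e k) ((del / 3) *: e l) x =
    (del / 3) ^+ 2 * pd l (pd k f) (s *: e k + (t *: e l + x))].
  apply: diff2_mvt => // s t s_in t_in.
  have [Oy _] := near_x _ (square_in_ball x k l del_gt0 s_in t_in).
  by split; [exact: Ck_derivable f_C2 Oy | exact: Ck_derivable (Ck_pd k f_C2) Oy].
have [s1 [t1 [s1_in t1_in E1]]] := mvt i j.
have [s2 [t2 [s2_in t2_in E2]]] := mvt j i.
have [_ [close_a _]] := near_x _ (square_in_ball x i j del_gt0 s1_in t1_in).
have [_ [_ close_b]] := near_x _ (square_in_ball x j i del_gt0 s2_in t2_in).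
have same_value : pd j (pd i f) (s1 *: e i + (t1 *: e j + x)) =
    pd i (pd j f) (s2 *: e j + (t2 *: e i + x)).
  apply: (mulfI (expf_neq0 2 (lt0r_neq0 h_gt0))).
  exact: etrans (esym E1) (etrans (diff2C _ _ _ _) E2).
rewrite same_value in close_a; rewrite distrC in close_b.
rewrite add0r (splitr eps); apply: le_trans (ler_distD _ a b) _.
exact/ltW/(ltrD close_a close_b).
Qed.
End PartialDerivatives.

Lemma CauchySchwarz_sum (R : realFieldType) (I : finType) (a b : I -> R) :
  (\sum_i a i * b i) ^+ 2 <= (\sum_i a i ^+ 2) * (\sum_i b i ^+ 2).
Proof.
have lagrange : \sum_i \sum_j (a i * b j - a j * b i) ^+ 2
    = 2 * ((\sum_i a i ^+ 2) * (\sum_i b i ^+ 2) - (\sum_i a i * b i) ^+ 2).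
  pose X i j := a i ^+ 2 * b j ^+ 2; pose Y i j := a i * b i * (a j * b j).
  transitivity (\sum_i \sum_j X i j + \sum_i \sum_j X j i - 2 * \sum_i \sum_j Y i j).
    rewrite mulr_sumr -big_split -sumrB; apply: eq_bigr => i _.
    by rewrite mulr_sumr -big_split -sumrB; apply: eq_bigr => j _; rewrite /X /Y /=; ring.
  by rewrite [\sum_i \sum_j X j i]exchange_big /X /Y -!big_distrlr /=; ring.
have : 0 <= \sum_i \sum_j (a i * b j - a j * b i) ^+ 2.
  by do 2!(apply: sumr_ge0 => ? _); exact: sqr_ge0.
by rewrite lagrange pmulr_rge0 // subr_ge0.
Qed.

Lemma remainder_lower_bound (R : realFieldType) (A G S HH Wsq Psq ia C : R) :
  0 <= A -> 0 <= Psq -> 0 <= HH -> 0 <= Wsq -> Wsq <= S * HH ->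
  (0 < S -> ia * A <= 2 * S * G) -> C <= 1 -> C <= 1 + 2 * ia ->
  C * A ^+ 2 * HH <= Psq + A ^+ 2 * HH + 2 * A * (2 * G * Wsq).
Proof.
move=> A_ge0 Psq_ge0 HH_ge0 Wsq_ge0 Wsq_le ia_le C_le1 C_le_ia.
have A2HH_ge0 : 0 <= A ^+ 2 * HH by rewrite mulr_ge0 ?sqr_ge0.
have CA2HH : C * A ^+ 2 * HH <= A ^+ 2 * HH by rewrite -mulrA ler_piMl.
have [G_ge0|G_lt0] := leP 0 G.
  have : 0 <= 2 * A * (2 * G * Wsq) by rewrite !mulr_ge0.
  lra.
have [S_gt0|S_le0] := ltP 0 S; last first.
  have -> : Wsq = 0 by apply/le_anti; rewrite Wsq_ge0 (le_trans Wsq_le) ?mulr_le0_ge0.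
  by rewrite mulr0; lra.
have W_bound : 2 * A * (2 * G * (S * HH)) <= 2 * A * (2 * G * Wsq).
  by rewrite ler_wpM2l ?mulr_ge0 // ler_wnM2l // pmulr_rle0 // ltW.
have index_bound : 2 * (A * HH) * (ia * A) <= 2 * (A * HH) * (2 * S * G).
  by rewrite ler_wpM2l ?mulr_ge0 // ia_le.
have C_bound : C * (A ^+ 2 * HH) <= (1 + 2 * ia) * (A ^+ 2 * HH).
  exact: ler_wpM2r.
move: W_bound index_bound C_bound; rewrite !expr2; lra.
Qed.

Section GradientNorm.
Variables (R : realType) (n N : nat) (u : 'I_N -> 'rV[R]_n -> R).

Definition gradnorm2 (y : 'rV[R]_n) : R := \sum_(al < N) \sum_(i < n) pd i (u al) y ^+ 2.

Definition grad_dot_pd (k : 'I_n) (y : 'rV[R]_n) : R :=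
  \sum_(al < N) \sum_(j < n) pd j (u al) y * pd k (pd j (u al)) y.

Lemma gradnorm2_ge0 y : 0 <= gradnorm2 y.
Proof. by do 2!(apply: sumr_ge0 => ? _); exact: sqr_ge0. Qed.

Lemma sqr_gradnorm y : gradnorm u y ^+ 2 = gradnorm2 y.
Proof. exact/sqr_sqrtr/gradnorm2_ge0. Qed.

Lemma hess2_ge0 y : 0 <= hess2 u y.
Proof. by do 3!(apply: sumr_ge0 => ? _); exact: sqr_ge0. Qed.

Lemma is_derive_gradnorm2 x k :
  (forall al j, derivable (pd j (u al)) x (delta_mx 0 k)) ->
  is_derive x (delta_mx 0 k) gradnorm2 (2 * grad_dot_pd k x).
Proof.
move=> pd_derivable.
suff -> : 2 * grad_dot_pd k x = \sum_(al < N) \sum_(j < n)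
    (pd j (u al) x * pd k (pd j (u al)) x + pd j (u al) x * pd k (pd j (u al)) x).
  apply: is_derive_sumr => al; apply: is_derive_sumr => j.
  exact: is_derive_mul (derivableP (pd_derivable al j)) (derivableP (pd_derivable al j)).
rewrite /grad_dot_pd mulr_sumr; apply: eq_bigr => al _.
by rewrite mulr_sumr; apply: eq_bigr => j _; ring.
Qed.

Lemma sum_sqr_grad_dot_pd_le x :
  \sum_(k < n) grad_dot_pd k x ^+ 2 <= gradnorm2 x * hess2 u x.
Proof.
have CS k : grad_dot_pd k x ^+ 2 <=
    gradnorm2 x * \sum_(al < N) \sum_(j < n) pd k (pd j (u al)) x ^+ 2.
  rewrite /grad_dot_pd /gradnorm2 !pair_bigA /=; exact: CauchySchwarz_sum.
have hess2E : \sum_(k < n) \sum_(al < N) \sum_(j < n) pd k (pd j (u al)) x ^+ 2 = hess2 u x.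
  by rewrite /hess2 exchange_big; apply: eq_bigr => al _; exact: exchange_big.
by rewrite -hess2E mulr_sumr; apply: ler_sum => k _.
Qed.
End GradientNorm.

Section DivergenceIdentity.
Variables (R : realType) (n N : nat) (O : set 'rV[R]_n).
Variables (u : 'I_N -> 'rV[R]_n -> R) (A : 'rV[R]_n -> R) (x : 'rV[R]_n).
Variable dA : 'I_n -> R.
Hypotheses (O_open : open O) (Ox : O x) (u_C3 : forall al, Ck 3 O (u al)).
Hypothesis A_derive : forall k, is_derive x (delta_mx 0 k) A (dA k).

Local Notation U al i := (pd i (u al) x).
Local Notation H al i j := (pd j (pd i (u al)) x).
Local Notation T al i j k := (pd k (pd j (pd i (u al))) x).

Let U_derive al i k : is_derive x (delta_mx 0 k) (pd i (u al)) (H al i k).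
Proof. exact: derivableP (Ck_derivable (Ck_pd i (u_C3 al)) Ox). Qed.

Let H_derive al i j k : is_derive x (delta_mx 0 k) (pd j (pd i (u al))) (T al i j k).
Proof. exact: derivableP (Ck_derivable (Ck_pd j (Ck_pd i (u_C3 al))) Ox). Qed.

Let A2_derive k : is_derive x (delta_mx 0 k) (fun y => A y ^+ 2) (2 * A x * dA k).
Proof.
have := is_derive_mul (A_derive k) (A_derive k).
by rewrite (_ : A x * dA k + A x * dA k = 2 * A x * dA k) //; ring.
Qed.

Let lap_derive al j :
  is_derive x (delta_mx 0 j) (lap (u al)) (\sum_(i < n) T al i i j).
Proof. exact: is_derive_sumr. Qed.

Let H_sym al i j : H al i j = H al j i.
Proof. exact (Ck2_pdC i j O_open Ox (CkS (u_C3 al))). Qed.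

Let T_sym al i j : T al i j i = T al i i j.
Proof. exact (Ck2_pdC j i O_open Ox (Ck_pd i (u_C3 al))). Qed.

Lemma pd_flux al i :
  pd i (fun y => A y * pd i (u al) y) x = A x * H al i i + U al i * dA i.
Proof. exact/pd_val/is_derive_mul. Qed.

Local Notation Du_dot_DA al := (\sum_(i < n) U al i * dA i).
Local Notation Du_dot_DLap :=
  (\sum_(al < N) \sum_(j < n) U al j * \sum_(i < n) T al i i j).

Lemma sum_pd_flux_lap :
  \sum_(j < n) pd j (fun y => A y ^+ 2 * \sum_(al < N) pd j (u al) y * lap (u al) y) x
  = A x ^+ 2 * (Du_dot_DLap + \sum_(al < N) lap (u al) x ^+ 2)
    + 2 * A x * \sum_(al < N) lap (u al) x * Du_dot_DA al.
Proof.
rewrite (eq_bigr _ (fun j _ => pd_val (is_derive_mul (A2_derive j)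
  (is_derive_sumr (fun al => is_derive_mul (U_derive al j j) (lap_derive al j)))))).
under eq_bigr => j _ do rewrite mulr_sumr mulr_suml -big_split /=.
rewrite exchange_big -big_split !mulr_sumr -big_split /=.
apply: eq_bigr => al _; set L := lap (u al) x.
have LE : L = \sum_(j < n) H al j j by [].
have -> : L ^+ 2 = \sum_(j < n) L * H al j j by rewrite expr2 {2}LE mulr_sumr.
rewrite -big_split /= !mulr_sumr -big_split /=.
by apply: eq_bigr => j _; ring.
Qed.

Lemma sum_pd_flux_hess :
  \sum_(i < n) pd i (fun y => A y ^+ 2 *
      \sum_(j < n) \sum_(al < N) pd j (u al) y * pd j (pd i (u al)) y) x
  = A x ^+ 2 * (Du_dot_DLap + hess2 u x) + 2 * A x * \sum_(i < n) grad_dot_pd u i x * dA i.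
Proof.
rewrite (eq_bigr _ (fun i _ => pd_val (is_derive_mul (A2_derive i)
  (is_derive_sumr (fun j => is_derive_sumr (fun al =>
     is_derive_mul (U_derive al j i) (H_derive al i j i))))))).
rewrite big_split /= -mulr_sumr; congr (_ * _ + _).
  rewrite (eq_bigr (fun i => \sum_(j < n) \sum_(al < N) (U al j * T al i i j + H al i j ^+ 2))); last first.
    by move=> i _; apply: eq_bigr => j _; apply: eq_bigr => al _; rewrite T_sym -H_sym.
  under eq_bigr => i _ do rewrite exchange_big /=.
  rewrite exchange_big /hess2 -big_split /=; apply: eq_bigr => al _.
  under eq_bigr => i _ do rewrite big_split /=.
  rewrite big_split /=; apply: (congr2 +%R) => //.
  by rewrite exchange_big; apply: eq_bigr => j _; rewrite mulr_sumr.
rewrite mulr_sumr; apply: eq_bigr => i _.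
have -> : \sum_(j < n) \sum_(al < N) U al j * H al i j = grad_dot_pd u i x.
  by rewrite exchange_big; apply: eq_bigr => al _; apply: eq_bigr => j _; rewrite H_sym.
by rewrite mulrCA mulrA.
Qed.

Lemma divergence_identity :
  \sum_(al < N) (\sum_(i < n) pd i (fun y => A y * pd i (u al) y) x) ^+ 2
  = \sum_(j < n) pd j (fun y => A y ^+ 2 *
      \sum_(al < N) pd j (u al) y * lap (u al) y) x
  - \sum_(i < n) pd i (fun y => A y ^+ 2 *
      \sum_(j < n) \sum_(al < N) pd j (u al) y * pd j (pd i (u al)) y) x
  + (\sum_(al < N) Du_dot_DA al ^+ 2 + A x ^+ 2 * hess2 u x
     + 2 * A x * \sum_(i < n) grad_dot_pd u i x * dA i).
Proof.
rewrite sum_pd_flux_lap sum_pd_flux_hess.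
rewrite (eq_bigr (fun al => A x ^+ 2 * lap (u al) x ^+ 2
    + 2 * A x * (lap (u al) x * Du_dot_DA al) + Du_dot_DA al ^+ 2)); last first.
  move=> al _; rewrite (eq_bigr _ (fun i _ => pd_flux al i)) big_split /= -mulr_sumr.
  by rewrite /lap; ring.
rewrite !big_split /= -!mulr_sumr; ring.
Qed.

End DivergenceIdentity.

Section Coefficient.
Variables (R : realType) (n N : nat) (u : 'I_N -> 'rV[R]_n -> R) (a ahat : R -> R).
Hypothesis aE : forall t, 0 <= t -> a t = ahat (t ^+ 2).

Lemma a_gradnorm_ge0 y : 0 <= a 0 -> (forall t, 0 < t -> 0 < a t) ->
  0 <= a (gradnorm u y).
Proof.
move=> a0_ge0 a_gt0; have [->|gn_neq0] := eqVneq (gradnorm u y) 0 => //.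
by apply/ltW/a_gt0; rewrite lt_def gn_neq0 sqrtr_ge0.
Qed.

Lemma a_gradnormE y : a (gradnorm u y) = ahat (gradnorm2 u y).
Proof. by rewrite aE ?sqrtr_ge0 // sqr_gradnorm. Qed.

Lemma is_derive_a_gradnorm x k dahat :
  is_derive_halfline ahat (gradnorm2 u x) dahat ->
  (forall al j, derivable (pd j (u al)) x (delta_mx 0 k)) ->
  is_derive x (delta_mx 0 k) (fun y => a (gradnorm u y)) (2 * dahat * grad_dot_pd u k x).
Proof.
move=> ahat_d pd_derivable.
rewrite (_ : (fun y => _) = fun y => ahat (gradnorm2 u y)); last exact/funext/a_gradnormE.
rewrite -mulrA mulrCA.
exact: is_derive_halfline_comp (@gradnorm2_ge0 _ _ _ u) ahat_d (is_derive_gradnorm2 pd_derivable).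
Qed.

Lemma index_bound_gradnorm x ia dahat :
  (forall t, 0 < t -> 0 < a t) -> is_derive_halfline ahat (gradnorm2 u x) dahat ->
  ereal_inf [set ((t * derive1 a t / a t)%:E) | t in `]0, +oo[%classic] = ia%:E ->
  0 < gradnorm2 u x -> ia * a (gradnorm u x) <= 2 * gradnorm2 u x * dahat.
Proof.
move=> a_gt0 ahat_d infE S_gt0.
have gn_gt0 : 0 < gradnorm u x by rewrite sqrtr_gt0.
rewrite -sqr_gradnorm; apply: (index_lower_bound aE gn_gt0 (a_gt0 _ gn_gt0) _ infE).
by rewrite sqr_gradnorm.
Qed.
End Coefficient.

Theorem lemma3p3 (R : realType) (n N : nat) (hn : (2 <= n)%N) (hN : (1 <= N)%N)
  (ia : R) (hia : - (1 / 2) < ia) :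
  exists C : R, 0 < C /\
  forall (O : set 'rV[R]_n) (a ahat : R -> R),
    open O ->
    C1_halfline ahat ->
    (forall t : R, 0 <= t -> a t = ahat (t ^+ 2)) ->
    0 <= a 0 ->
    (forall t : R, 0 < t -> 0 < a t) ->
    ereal_inf [set ((t * derive1 a t / a t)%:E) | t in `]0, +oo[%classic] = ia%:E ->
    forall u : 'I_N -> 'rV[R]_n -> R,
    (forall al, Ck 3 O (u al)) ->
    let A := fun y => a (gradnorm u y) in
    forall x, O x ->
      \sum_(al < N) (\sum_(i < n) pd i (fun y => A y * pd i (u al) y) x) ^+ 2
      >= \sum_(j < n) pd j (fun y => A y ^+ 2 *
                              \sum_(al < N) pd j (u al) y * lap (u al) y) x
         - \sum_(i < n) pd i (fun y => A y ^+ 2 *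
              \sum_(j < n) \sum_(al < N) pd j (u al) y * pd j (pd i (u al)) y) x
         + C * A x ^+ 2 * hess2 u x.
Proof.
exists (Num.min 1 (1 + 2 * ia)); split; first by rewrite lt_min ltr01 /=; lra.
move=> O a ahat O_open [g [ahat_g _]] aE a0_ge0 a_gt0 infE u u_C3 A x Ox.
pose G := g (gradnorm2 u x).
have ahat_G : is_derive_halfline ahat (gradnorm2 u x) G := ahat_g _ (gradnorm2_ge0 u x).
have A_derive k : is_derive x (delta_mx 0 k) A (2 * G * grad_dot_pd u k x).
  apply: (is_derive_a_gradnorm aE ahat_G) => al j.
  exact: Ck_derivable (Ck_pd j (u_C3 al)) Ox.
rewrite (divergence_identity O_open Ox u_C3 A_derive) lerD2l.
have -> : \sum_(i < n) grad_dot_pd u i x * (2 * G * grad_dot_pd u i x)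
    = 2 * G * \sum_(i < n) grad_dot_pd u i x ^+ 2.
  by rewrite mulr_sumr; apply: eq_bigr => i _; ring.
apply: (remainder_lower_bound (S := gradnorm2 u x) (ia := ia)).
- exact: a_gradnorm_ge0.
- by apply: sumr_ge0 => al _; exact: sqr_ge0.
- exact: hess2_ge0.
- by apply: sumr_ge0 => i _; exact: sqr_ge0.
- exact: sum_sqr_grad_dot_pd_le.
- exact (index_bound_gradnorm aE a_gt0 ahat_G infE).
- by rewrite ge_min lexx.
- by rewrite ge_min lexx orbT.
Qed.
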